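(* Let $f\in C^1[0,1]$ with $f(0)=0$, $h:=f'$, and $q$ satisfying (q). Then $$c^*\ge\max\Big\{\sup_{\varphi\in(0,1]}\frac{f(\varphi)}{\varphi},\ h(0)+2\sqrt{\liminf_{\varphi\to0^+}\frac{q(\varphi)}{\varphi}}\Big\}.$$
   Context: Condition (q): $q\in C[0,1]$, $q>0$ on $(0,1)$, $q(0)=q(1)=0$, and $\limsup_{\varphi\to0^+}q(\varphi)/\varphi<+\infty$. $c^*$ denotes the real number such that there exists $z\in C[0,1]\cap C^1(0,1)$ with $\dot z=h-c-q/z$ and $z<0$ on $(0,1)$, and $z(0)=z(1)=0$, if and only if $c\ge c^*$ (such $z$ then being unique). *)

From Stdlib Require Import Reals.
From Coquelicot Require Import Coquelicot.
Open Scope R_scope.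

Definition cont_on01 (g : R -> R) : Prop :=
  forall x, 0 <= x <= 1 ->
    filterlim g (within (fun y => 0 <= y <= 1) (locally x)) (locally (g x)).

Definition deriv_on01 (f h : R -> R) : Prop :=
  forall x, 0 <= x <= 1 ->
    filterlim (fun y => (f y - f x) / (y - x))
      (within (fun y => 0 <= y <= 1 /\ y <> x) (locally x)) (locally (h x)).

Definition C1_01 (f h : R -> R) : Prop := deriv_on01 f h /\ cont_on01 h.

Definition liminf_0p (g : R -> R) : Rbar :=
  Lub_Rbar (fun m => exists d, 0 < d /\ forall x, 0 < x < d -> m <= g x).
Definition limsup_0p (g : R -> R) : Rbar :=
  Glb_Rbar (fun M => exists d, 0 < d /\ forall x, 0 < x < d -> g x <= M).

Definition sup_0_1 (g : R -> R) : Rbar :=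
  Lub_Rbar (fun y => exists x, 0 < x <= 1 /\ y = g x).

Definition Rbar_maxd (a b : Rbar) : Rbar := if Rbar_le_dec a b then b else a.

Definition cond_q (q : R -> R) : Prop :=
  cont_on01 q /\ (forall x, 0 < x < 1 -> 0 < q x) /\ q 0 = 0 /\ q 1 = 0 /\
  Rbar_lt (limsup_0p (fun x => q x / x)) p_infty.

Definition admissible (h q : R -> R) (c : R) : Prop :=
  exists z : R -> R,
    cont_on01 z /\
    (forall x, 0 < x < 1 -> is_derive z x (h x - c - q x / z x)) /\
    (forall x, 0 < x < 1 -> z x < 0) /\
    z 0 = 0 /\ z 1 = 0.

Definition is_cstar (h q : R -> R) (cs : R) : Prop :=
  forall c, admissible h q c <-> cs <= c.

(* Take the solution z of  z' = h - c* - q/z,  z < 0 on (0,1),  z(0) = z(1) = 0,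
   which exists at c = c*.  Both bounds follow from this single trajectory.

   * Slope bound.  g := z - f + c* x  satisfies  g' = -q/z > 0  on (0,1) and
     g(0) = 0, so g >= 0 on (0,1]; since z <= 0 this gives f(x) <= c* x.

   If c* < h(0) + 2 sqrt L, L the liminf of q(x)/x at 0+,
     pick A and T with  c* - h(0) < A < 2T  and  q(x) >= T^2 x  near 0.  Then near 0
     z' >= -A + T^2 x/(-z), so first z(x) >= -A x, and then, writing r = -z/x,
     the AM-GM inequality  T^2/r + r >= 2T  makes  z(x)/x - (2T - A) ln x
     nondecreasing; hence z(x)/x -> -oo as x -> 0+, contradicting z(x) >= -A x. *)

From Stdlib Require Import Reals Lra.
From Coquelicot Require Import Coquelicot.
Open Scope R_scope.

Definition I01 (y : R) : Prop := 0 <= y <= 1.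

Lemma at_right0_le_I01 : filter_le (at_right 0) (within I01 (locally 0)).
Proof.
  intros P HP. unfold at_right, within in HP |- *.
  generalize (filter_and _ _ HP (open_lt 1 0 Rlt_0_1)).
  apply filter_imp. intros y [HPy Hy1] Hy0. apply HPy. unfold I01. lra.
Qed.

Lemma at_left1_le_I01 : filter_le (at_left 1) (within I01 (locally 1)).
Proof.
  intros P HP. unfold at_left, within in HP |- *.
  generalize (filter_and _ _ HP (open_gt 0 1 Rlt_0_1)).
  apply filter_imp. intros y [HPy Hy0] Hy1. apply HPy. unfold I01. lra.
Qed.

Lemma at_right_interval (a : R) (P : R -> Prop) :
  at_right a P -> exists d, 0 < d /\ forall y, a < y < a + d -> P y.
Proof.
  intros [eps H]. exists eps. split; [apply cond_pos|].
  intros y Hy. apply H; [|lra]. apply (Rabs_lt_between' y a eps). lra.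
Qed.

Lemma filterlim_within_plus (D : R -> Prop) (x : R) (f g : R -> R) (lf lg : R) :
  filterlim f (within D (locally x)) (locally lf) ->
  filterlim g (within D (locally x)) (locally lg) ->
  filterlim (fun t => f t + g t) (within D (locally x)) (locally (lf + lg)).
Proof. intros Hf Hg. exact (filterlim_comp_2 _ _ _ Hf Hg (filterlim_plus lf lg)). Qed.

Lemma filterlim_within_mult (D : R -> Prop) (x : R) (f g : R -> R) (lf lg : R) :
  filterlim f (within D (locally x)) (locally lf) ->
  filterlim g (within D (locally x)) (locally lg) ->
  filterlim (fun t => f t * g t) (within D (locally x)) (locally (lf * lg)).
Proof. intros Hf Hg. exact (filterlim_comp_2 _ _ _ Hf Hg (filterlim_mult lf lg)). Qed.

Lemma filterlim_within_id (D : R -> Prop) (x : R) :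
  filterlim (fun y => y) (within D (locally x)) (locally x).
Proof. apply (filterlim_filter_le_1 _ (filter_le_within D)), filterlim_id. Qed.

Lemma cont_on01_plus (g1 g2 : R -> R) :
  cont_on01 g1 -> cont_on01 g2 -> cont_on01 (fun y => g1 y + g2 y).
Proof. intros H1 H2 x Hx. exact (filterlim_within_plus _ _ _ _ _ _ (H1 x Hx) (H2 x Hx)). Qed.

Lemma cont_on01_scal (k : R) (g : R -> R) : cont_on01 g -> cont_on01 (fun y => k * g y).
Proof. intros H x Hx. exact (filterlim_within_mult _ _ _ _ _ _ (filterlim_const k) (H x Hx)). Qed.

Lemma cont_on01_id : cont_on01 (fun y => y).
Proof. intros x _. apply filterlim_within_id. Qed.

(* A function with a one-sided derivative at every point of [0,1] is continuous
   there: f y = (f y - f x)/(y - x) * (y - x) + f x  tends to  h x * 0 + f x. *)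
Lemma deriv_on01_cont (f h : R -> R) : deriv_on01 f h -> cont_on01 f.
Proof.
  intros Hd x Hx.
  set (D := fun y => 0 <= y <= 1 /\ y <> x).
  assert (Hpunct : filterlim f (within D (locally x)) (locally (f x))).
  { assert (Hdx : filterlim (fun y => y + - x) (within D (locally x)) (locally 0)).
    { rewrite <- (Rplus_opp_r x).
      apply filterlim_within_plus; [apply filterlim_within_id | apply filterlim_const]. }
    apply (filterlim_ext_loc (fun y => (f y - f x) / (y - x) * (y + - x) + f x)).
    - unfold within. apply filter_forall. intros y [_ Hyx]. field. lra.
    - replace (locally (f x)) with (locally (h x * 0 + f x)) by (f_equal; ring).
      apply filterlim_within_plus; [apply filterlim_within_mult; auto | apply filterlim_const]. }
  intros P HP. generalize (Hpunct P HP). unfold filtermap, within. apply filter_imp.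
  intros y HPy Hy. destruct (Req_dec y x) as [->|Hne].
  - exact (locally_singleton _ _ HP).
  - apply HPy. split; assumption.
Qed.

Lemma deriv_on01_interior (f h : R -> R) (x : R) :
  deriv_on01 f h -> 0 < x < 1 -> is_derive f x (h x).
Proof.
  intros Hd Hx. apply is_derive_Reals. intros eps Heps.
  assert (Hx01 : 0 <= x <= 1) by lra.
  assert (Hnear := proj1 (filterlim_locally _ _) (Hd x Hx01) (mkposreal eps Heps)).
  unfold within in Hnear.
  destruct (filter_and _ _ Hnear (locally_interval (fun y => 0 < y < 1) x 0 1
    (proj1 Hx) (proj2 Hx) (fun y H0 H1 => conj H0 H1))) as [del Hdel].
  exists del. intros k Hk0 Hk.
  assert (Hball : ball x del (x + k)).
  { apply (Rabs_lt_between' (x + k) x del).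
    destruct (proj1 (Rabs_lt_between k del) Hk). lra. }
  destruct (Hdel (x + k) Hball) as [Hq Hin].
  specialize (Hq ltac:(split; lra)).
  replace (x + k - x) with k in Hq by ring. exact Hq.
Qed.

Lemma is_derive_Rplus (f g : R -> R) (x df dg : R) :
  is_derive f x df -> is_derive g x dg -> is_derive (fun y => f y + g y) x (df + dg).
Proof. exact (is_derive_plus f g x df dg). Qed.

Lemma is_derive_Rid (x : R) : is_derive (fun y => y) x 1.
Proof. exact (is_derive_id (K := R_AbsRing) x). Qed.

Lemma nondecreasing_of_deriv (G dG : R -> R) (lo hi : R) :
  (forall y, lo < y < hi -> is_derive G y (dG y) /\ 0 <= dG y) ->
  forall a b, lo < a -> a <= b -> b < hi -> G a <= G b.
Proof.
  intros H a b Ha Hab Hb.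
  destruct (Req_dec a b) as [->|Hne]; [lra|].
  destruct (MVT_gen G a b dG) as [y [Hy Heq]];
    rewrite ?Rmin_left, ?Rmax_right in * by lra.
  - intros y Hy. apply H. lra.
  - intros y Hy. apply derivable_continuous_pt. exists (dG y).
    apply is_derive_Reals, H. lra.
  - assert (0 <= dG y * (b - a)) by (apply Rmult_le_pos; [apply H|]; lra). lra.
Qed.

Lemma right_limit_le (G dG : R -> R) (lo hi l : R) :
  (forall y, lo < y < hi -> is_derive G y (dG y) /\ 0 <= dG y) ->
  filterlim G (at_right lo) (locally l) ->
  forall x, lo < x < hi -> l <= G x.
Proof.
  intros H Hlim x Hx.
  apply (filterlim_le (F := at_right lo) G (fun _ => G x) l (G x)); auto.
  - apply (locally_interval _ lo m_infty x); simpl; [exact I | lra |].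
    intros y _ Hyx Hly. apply (nondecreasing_of_deriv G dG lo hi); auto; lra.
  - apply filterlim_const.
Qed.

Lemma cont_on01_nondecreasing (g dg : R -> R) :
  cont_on01 g ->
  (forall y, 0 < y < 1 -> is_derive g y (dg y) /\ 0 <= dg y) ->
  forall x, 0 < x <= 1 -> g 0 <= g x.
Proof.
  intros Hc Hd.
  assert (Hin : forall x, 0 < x < 1 -> g 0 <= g x).
  { apply (right_limit_le g dg 0 1); auto.
    apply (filterlim_filter_le_1 _ at_right0_le_I01), Hc. unfold I01. lra. }
  intros x [Hx0 Hx1]. destruct (Req_dec x 1) as [->|Hne]; [|apply Hin; lra].
  apply (filterlim_le (F := at_left 1) (fun _ => g 0) g (g 0) (g 1)).
  - apply (locally_interval _ 1 0 p_infty); simpl; [lra | exact I |].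
    intros y Hy0 _ Hy1. apply Hin. lra.
  - apply filterlim_const.
  - apply (filterlim_filter_le_1 _ at_left1_le_I01), Hc. unfold I01. lra.
Qed.

Lemma admissible_ge_slope (f h q : R -> R) (c : R) :
  deriv_on01 f h -> f 0 = 0 -> (forall x, 0 < x < 1 -> 0 < q x) ->
  admissible h q c -> forall x, 0 < x <= 1 -> f x / x <= c.
Proof.
  intros Hf Hf0 Hq [z [Hz [Hzd [Hneg [Hz0 Hz1]]]]] x Hx.
  set (g := fun y => z y + (-1 * f y + c * y)).
  assert (Hg : g 0 <= g x).
  { apply (cont_on01_nondecreasing g (fun y => (h y - c - q y / z y) + (-1 * h y + c * 1))).
    - apply cont_on01_plus; auto.
      apply cont_on01_plus; apply cont_on01_scal; [apply (deriv_on01_cont f h) | ]; auto.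
      apply cont_on01_id.
    - intros y Hy. split.
      + apply is_derive_Rplus; [auto|]. apply is_derive_Rplus; apply is_derive_scal;
          [apply deriv_on01_interior | apply is_derive_Rid]; auto.
      + specialize (Hq y Hy). specialize (Hneg y Hy).
        assert (0 < q y / - z y) by (apply Rdiv_lt_0_compat; lra).
        replace (h y - c - q y / z y + (-1 * h y + c * 1)) with (q y / - z y)
          by (field; lra). lra.
    - exact Hx. }
  assert (Hzx : z x <= 0)
    by (destruct (Req_dec x 1) as [->|]; [lra | apply Rlt_le, Hneg; lra]).
  unfold g in Hg. rewrite Hz0, Hf0 in Hg.
  apply Rle_div_l; lra.
Qed.

(* The line bound z >= -A y is violated
   because z/y - (2T - A) ln y is nondecreasing, forcing z/y -> -oo. *)
Lemma supersolution_cannot_vanish (z dz : R -> R) (A T d : R) :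
  0 < d -> A < 2 * T ->
  filterlim z (at_right 0) (locally 0) ->
  (forall y, 0 < y < d -> is_derive z y (dz y)) ->
  (forall y, 0 < y < d -> z y < 0) ->
  (forall y, 0 < y < d -> - A + T * T * y / - z y <= dz y) -> False.
Proof.
  intros Hd HAT Hz0 Hdz Hneg Hsup.
  assert (Hquad : forall y, 0 < y < d -> 0 <= T * T * y / - z y).
  { intros y Hy. specialize (Hneg y Hy).
    apply Rdiv_le_0_compat; [apply Rmult_le_pos; nra | lra]. }
  assert (Hline : forall y, 0 < y < d -> - A <= z y / y).
  { intros y Hy. apply Rle_div_r; [lra|].
    assert (H0 : 0 <= A * y + z y); [|lra].
    apply (right_limit_le (fun t => A * t + z t) (fun t => A * 1 + dz t) 0 d); auto.
    - intros t Ht. split.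
      + apply is_derive_Rplus; [apply is_derive_scal, is_derive_Rid | auto].
      + specialize (Hsup t Ht). specialize (Hquad t Ht). lra.
    - replace 0 with (A * 0 + 0) at 2 by ring.
      apply filterlim_within_plus; auto.
      apply filterlim_within_mult; [apply filterlim_const | apply filterlim_within_id]. }
  set (k := 2 * T - A).
  assert (Hmono : forall a b, 0 < a -> a <= b -> b < d ->
    z a / a + - k * ln a <= z b / b + - k * ln b).
  { apply (nondecreasing_of_deriv (fun y => z y / y + - k * ln y)
      (fun y => (dz y * y - z y * 1) / y ^ 2 + - k * / y) 0 d).
    intros y Hy. split.
    - apply is_derive_Rplus; [apply is_derive_div; auto; [apply is_derive_Rid | lra]|].
      apply is_derive_scal, is_derive_ln. lra.
    - specialize (Hsup y Hy). specialize (Hneg y Hy).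
      set (r := - z y / y).
      assert (Hr : 0 < r) by (apply Rdiv_lt_0_compat; lra).
      assert (Hamgm : 2 * T <= T * T / r + r).
      { assert (0 <= (r - T) * (r - T) / r) by (apply Rdiv_le_0_compat; [apply Rle_0_sqr | lra]).
        replace ((r - T) * (r - T) / r) with (T * T / r + r - 2 * T) in H by (field; lra).
        lra. }
      replace (T * T * y / - z y) with (T * T / r) in Hsup by (unfold r; field; lra).
      replace ((dz y * y - z y * 1) / y ^ 2 + - k * / y) with ((dz y + r - k) / y)
        by (unfold r; field; lra).
      apply Rdiv_le_0_compat; unfold k in *; lra. }
  set (p := d / 2).
  set (K := (Rabs (z p / p + A) + 1) / k).
  set (y := p * exp (- K)).
  assert (HK : 0 < K) by (apply Rdiv_lt_0_compat; [generalize (Rabs_pos (z p / p + A)) |]; unfold k; lra).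
  assert (Hexp : 0 < exp (- K) < 1)
    by (split; [apply exp_pos | rewrite <- exp_0; apply exp_increasing; lra]).
  assert (Hy : 0 < y < p) by (unfold y, p; split; nra).
  assert (Hln : ln y = ln p - K) by (unfold y, p; rewrite ln_mult, ln_exp by lra; ring).
  specialize (Hmono y p ltac:(lra) ltac:(lra) ltac:(unfold p; lra)).
  rewrite Hln in Hmono.
  assert (HkK : k * K = Rabs (z p / p + A) + 1) by (unfold K, k in *; field; lra).
  generalize (Hline y ltac:(unfold p in *; lra)) (Rle_abs (z p / p + A)). nra.
Qed.

Lemma liminf_0p_eventually (g : R -> R) (b : R) :
  Rbar_lt b (liminf_0p g) -> exists d, 0 < d /\ forall x, 0 < x < d -> b <= g x.
Proof.
  intros Hlt. apply Classical_Prop.NNPP. intros Hno.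
  destruct (Lub_Rbar_correct (fun m => exists d, 0 < d /\ forall x, 0 < x < d -> m <= g x))
    as [_ Hleast].
  assert (Hub : Rbar_le (liminf_0p g) b).
  { apply Hleast. intros m [d [Hd Hm]]. simpl.
    apply Rnot_lt_le. intros Hbm. apply Hno. exists d. split; auto.
    intros x Hx. specialize (Hm x Hx). lra. }
  exact (Rbar_le_not_lt _ _ Hub Hlt).
Qed.

(* An extended real with positive real part is finite, so it is compared through it. *)
Lemma Rbar_lt_of_real (x : R) (L : Rbar) : 0 < real L -> x < real L -> Rbar_lt x L.
Proof. destruct L as [l| |]; simpl; intros; lra. Qed.

Lemma q_eventually_above (q : R -> R) (A : R) :
  (forall x, 0 < x < 1 -> 0 < q x) ->
  A < 2 * sqrt (real (liminf_0p (fun x => q x / x))) ->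
  exists T d, A < 2 * T /\ 0 < d /\ forall y, 0 < y < d -> T * T * y <= q y.
Proof.
  intros Hq HA.
  set (L := liminf_0p (fun x => q x / x)) in HA.
  destruct (Rlt_le_dec A 0) as [Hneg|Hnn].
  - exists 0, 1. repeat split; [lra | lra |].
    intros y Hy. specialize (Hq y Hy). lra.
  - set (S := sqrt (real L)) in HA.
    set (T := (A / 2 + S) / 2).
    assert (HL : 0 < real L)
      by (apply Rnot_le_lt; intros HL; unfold S in HA; rewrite sqrt_neg_0 in HA; lra).
    assert (HS : S * S = real L) by (apply sqrt_sqrt; lra).
    destruct (liminf_0p_eventually (fun x => q x / x) (T * T)) as [d [Hd Hb]].
    { apply Rbar_lt_of_real; [exact HL |].
      assert (0 <= T < S) by (unfold T; lra). change (T * T < real L). rewrite <- HS. nra. }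
    exists T, d. repeat split; [unfold T; lra | exact Hd |].
    intros y Hy. specialize (Hb y Hy). apply Rle_div_r in Hb; lra.
Qed.

Lemma admissible_ge_front_speed (h q : R -> R) (c : R) :
  cont_on01 h -> (forall x, 0 < x < 1 -> 0 < q x) -> admissible h q c ->
  h 0 + 2 * sqrt (real (liminf_0p (fun x => q x / x))) <= c.
Proof.
  intros Hh Hq [z [Hz [Hzd [Hneg [Hz0 _]]]]].
  apply Rnot_lt_le. intros Hlt.
  set (A := (c - h 0 + 2 * sqrt (real (liminf_0p (fun x => q x / x)))) / 2).
  destruct (q_eventually_above q A Hq) as [T [d1 [HAT [Hd1 HqT]]]]; [unfold A; lra|].
  assert (Hh0 : at_right 0 (fun y => c - A < h y)).
  { apply (filterlim_filter_le_1 _ at_right0_le_I01 (Hh 0 ltac:(unfold I01; lra))).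
    apply (open_gt (c - A)). unfold A. lra. }
  destruct (at_right_interval 0 _ Hh0) as [d2 [Hd2 Hhy]].
  set (d := Rmin (Rmin d1 d2) 1).
  assert (Hd : 0 < d /\ d <= d1 /\ d <= d2 /\ d <= 1).
  { unfold d. split; [repeat apply Rmin_pos; lra |].
    generalize (Rmin_l (Rmin d1 d2) 1) (Rmin_r (Rmin d1 d2) 1) (Rmin_l d1 d2) (Rmin_r d1 d2).
    lra. }
  apply (supersolution_cannot_vanish z (fun y => h y - c - q y / z y) A T d); try lra.
  - replace (locally 0) with (locally (z 0)) by (rewrite Hz0; reflexivity).
    apply (filterlim_filter_le_1 _ at_right0_le_I01), Hz. unfold I01. lra.
  - intros y Hy. apply Hzd. lra.
  - intros y Hy. apply Hneg. lra.
  - intros y Hy. specialize (Hhy y ltac:(lra)). specialize (HqT y ltac:(lra)).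
    specialize (Hneg y ltac:(lra)).
    assert (T * T * y / - z y <= q y / - z y)
      by (apply Rmult_le_compat_r; [left; apply Rinv_0_lt_compat; lra | exact HqT]).
    replace (q y / z y) with (- (q y / - z y)) by (field; lra). lra.
Qed.

Lemma sup_0_1_le (g : R -> R) (c : R) :
  (forall x, 0 < x <= 1 -> g x <= c) -> Rbar_le (sup_0_1 g) c.
Proof.
  intros Hg. destruct (Lub_Rbar_correct (fun y => exists x, 0 < x <= 1 /\ y = g x))
    as [_ Hleast].
  apply Hleast. intros y [x [Hx ->]]. exact (Hg x Hx).
Qed.

Theorem corollary5p4 (f h q : R -> R) (cstar : R) :
  C1_01 f h -> f 0 = 0 -> cond_q q -> is_cstar h q cstar ->
  Rbar_le
    (Rbar_maxd (sup_0_1 (fun x => f x / x))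
       (Finite (h 0 + 2 * sqrt (real (liminf_0p (fun x => q x / x))))))
    (Finite cstar).
Proof.
  intros [Hf Hh] Hf0 [_ [Hq _]] Hcs.
  assert (Hadm : admissible h q cstar) by (apply Hcs; lra).
  unfold Rbar_maxd. destruct (Rbar_le_dec _ _).
  - exact (admissible_ge_front_speed h q cstar Hh Hq Hadm).
  - exact (sup_0_1_le _ cstar (admissible_ge_slope f h q cstar Hf Hf0 Hq Hadm)).
Qed.
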